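(* Let $F$ be a field, $A$ a finitely generated free abelian group, $F * A$ a twisted group algebra, and $A'<A$ a subgroup of finite index in $A$. Then $\dim(F * A')=\dim(F * A)$.
   Context: A twisted group algebra $F * A$ is an $F$-algebra with $F$-basis $\{\bar a: a\in A\}$ and $\bar a_1\bar a_2=\tau(a_1,a_2)\overline{a_1a_2}$, $\tau$ a 2-cocycle with values in $F\setminus\{0\}$; $F * A'$ is the subalgebra spanned by $\bar a$, $a\in A'$. $\dim$ denotes the Krull dimension, which for these algebras coincides with the global dimension. *)

From HB Require Import structures.
From mathcomp Require Import all_boot all_order all_algebra.
Set Implicit Arguments. Unset Strict Implicit. Unset Printing Implicit Defensive.
Import GRing.Theory.
Local Open Scope ring_scope.

(* The free abelian group Z^n, written additively. *)
Notation FA n := ('rV[int]_n).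

Section TwistedGroupAlgebra.
Variables (F : fieldType) (R : algType F) (n : nat) (u : FA n -> R).

Definition tga_span (S : FA n -> Prop) (x : R) : Prop :=
  exists (s : seq (FA n)) (c : FA n -> F),
    (forall a, a \in s -> S a) /\ x = \sum_(a <- s) c a *: u a.

Definition tga_basis : Prop :=
  (forall (s : seq (FA n)) (c : FA n -> F), uniq s ->
      \sum_(a <- s) c a *: u a = 0 -> forall a, a \in s -> c a = 0)
  /\ (forall x, tga_span (fun _ => True) x).

(* R = F * A with basis u and twisting 2-cocycle tau:
   u a1 * u a2 = tau(a1,a2) u (a1 a2) (group law written additively). *)
Definition twisted_group_algebra (tau : FA n -> FA n -> F) : Prop :=
  [/\ forall a b, tau a b != 0,
      forall a b c, tau a b * tau (a + b) c = tau a (b + c) * tau b c,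
      tga_basis
    & forall a b, u a * u b = tau a b *: u (a + b)].
End TwistedGroupAlgebra.

Section Subgroups.
Variable n : nat.
Definition is_subgroup (B : FA n -> Prop) : Prop :=
  B 0 /\ (forall a b, B a -> B b -> B (a - b)).
Definition finite_index (B : FA n -> Prop) : Prop :=
  exists s : seq (FA n), forall a, exists2 r, r \in s & B (a - r).
End Subgroups.

(* Right Krull (Gabriel--Rentschler) dimension of a subring S of a ring R,
   given as a subset S : R -> Prop; right ideals of S are subsets of S. *)
Section Krull.
Variable (R : nzRingType) (S : R -> Prop).

Definition subset_of (I J : R -> Prop) := forall x, I x -> J x.

Definition is_rideal (I : R -> Prop) : Prop :=
  [/\ subset_of I S, I 0,
      forall x y, I x -> I y -> I (x + y)
    & forall x y, I x -> S y -> I (x * y)].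

(* dev_le k I J : the interval [I, J] of the lattice of right ideals of S
   has deviation <= k, i.e. every descending chain J >= c0 >= c1 >= ... >= I
   of right ideals has all but finitely many factors [c (i+1), c i] of
   deviation < k (deviation -oo meaning the factor is trivial). *)
Fixpoint dev_le (k : nat) (I J : R -> Prop) : Prop :=
  forall c : nat -> (R -> Prop),
    (forall i, is_rideal (c i)) ->
    (forall i, subset_of (c i.+1) (c i)) ->
    (forall i, subset_of I (c i) /\ subset_of (c i) J) ->
    exists N, forall i, (N <= i)%N ->
      if k is k'.+1 then dev_le k' (c i.+1) (c i)
      else subset_of (c i) (c i.+1).

Definition rKdim_le (k : nat) : Prop := dev_le k (fun x => x = 0) S.
End Krull.

From mathcomp Require Import all_boot all_order all_algebra.
From Stdlib Require Import ClassicalEpsilon.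
Set Implicit Arguments. Unset Strict Implicit. Unset Printing Implicit Defensive.
Import GRing.Theory.
Local Open Scope ring_scope.

(* As a right [F * A']-module, [F * A] is the sum of the cyclic submodules
   [u r (F * A')], [r] running over coset representatives of [A'], each a
   quotient of [F * A']; by the modular law deviation does not grow under
   quotients and finite sums, so [dim (F * A) <= dim (F * A')].  Conversely the
   projection [pi] of [F * A] onto [F * A'] along the other cosets is left
   [F * A']-linear, and [c |-> {x | pi (x (F * A)) <= c}] embeds the lattice
   of right ideals of [F * A'] into that of [F * A]. *)

Section Deviation.
Variables (R : nzRingType) (P : (R -> Prop) -> Prop).

Fixpoint devP (k : nat) (I J : R -> Prop) : Prop :=
  forall c : nat -> (R -> Prop),
    (forall i, P (c i)) ->
    (forall i, subset_of (c i.+1) (c i)) ->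
    (forall i, subset_of I (c i) /\ subset_of (c i) J) ->
    exists N, forall i, (N <= i)%N ->
      if k is k'.+1 then devP k' (c i.+1) (c i)
      else subset_of (c i) (c i.+1).

Definition dev_lt k I J := if k is k'.+1 then devP k' I J else subset_of J I.

Definition chain I J (c : nat -> R -> Prop) :=
  [/\ forall i, P (c i), forall i, subset_of (c i.+1) (c i)
    & forall i, subset_of I (c i) /\ subset_of (c i) J].

Lemma devPE k I J : devP k I J <->
  forall c, chain I J c -> exists N, forall i, (N <= i)%N -> dev_lt k (c i.+1) (c i).
Proof.
by case: k => [|k]; split=> [H c [] | H c *]; [exact: H | apply: H | exact: H | apply: H].
Qed.

Lemma devPS k I J I' J' :
  subset_of I I' -> subset_of J' J -> devP k I J -> devP k I' J'.
Proof.
move=> sI sJ /devPE H; apply/devPE => c [cP cdec cbd]; apply: H; split=> // i.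
by have [h1 h2] := cbd i; split=> x hx; [apply: h1; apply: sI | apply: sJ; apply: h2].
Qed.

Lemma devP_trivial k I J : subset_of J I -> devP k I J.
Proof.
elim: k I J => [|k IH] I J sJI; apply/devPE => c [_ _ cbd]; exists 0%N => i _ /=;
  have sc : subset_of (c i) (c i.+1) := fun x hx => (cbd i.+1).1 x (sJI x ((cbd i).2 x hx)).
  exact: sc.
exact: IH.
Qed.

End Deviation.

Lemma dev_leE (R : nzRingType) (S : R -> Prop) k I J :
  dev_le S k I J <-> devP (is_rideal S) k I J.
Proof.
elim: k I J => [|k IH] I J /=; first by [].
by split=> H c cP cdec cbd; have [N HN] := H c cP cdec cbd; exists N => i /HN /IH.
Qed.

Section Transport.
Variables (R : nzRingType) (P Q : (R -> Prop) -> Prop).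
Variables (phi : (R -> Prop) -> R -> Prop) (J0 : R -> Prop).
Hypothesis phi_mono : forall c d, subset_of c d -> subset_of (phi c) (phi d).
Hypothesis phiP : forall c, Q c -> P (phi c).
Hypothesis phi_refl : forall c d, Q c -> Q d -> subset_of c J0 -> subset_of d J0 ->
  subset_of (phi c) (phi d) -> subset_of c d.

Lemma chain_transport I J I' J' c : subset_of J J0 -> subset_of I' (phi I) ->
  subset_of (phi J) J' -> chain Q I J c -> chain P I' J' (fun i => phi (c i)).
Proof.
move=> sJ sI sJ' [cQ cdec cbd]; split=> [i|i|i]; [exact: phiP | exact: phi_mono |].
split=> x hx; first by apply: (phi_mono (cbd i).1); apply: sI.
by apply: sJ'; apply: (phi_mono (cbd i).2).
Qed.

Lemma devP_transport k I J I' J' : subset_of J J0 -> subset_of I' (phi I) ->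
  subset_of (phi J) J' -> devP P k I' J' -> devP Q k I J.
Proof.
elim: k I J I' J' => [|k IH] I J I' J' sJ sI sJ' /devPE H; apply/devPE => c hc;
  have [N HN] := H _ (chain_transport sJ sI sJ' hc); exists N => i /HN /=;
  case: hc => cQ _ cbd;
  have cJ0 j : subset_of (c j) J0 := fun x hx => sJ x ((cbd j).2 x hx).
  exact: phi_refl.
by apply: IH => // x.
Qed.

End Transport.

Lemma devP_restrict (R : nzRingType) (P Q : (R -> Prop) -> Prop) k I J :
  (forall X, Q X -> P X) -> devP P k I J -> devP Q k I J.
Proof.
by move=> QP; apply: (@devP_transport _ P Q id (fun _ => True)).
Qed.

Section Submodules.
Variables (R : nzRingType) (S : R -> Prop).

Definition rsubmod (X : R -> Prop) : Prop :=
  [/\ X 0, forall x y, X x -> X y -> X (x + y)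
    & forall x s, X x -> S s -> X (x * s)].

Definition mzero : R -> Prop := fun z => z = 0.
Definition mcap (X Y : R -> Prop) : R -> Prop := fun z => X z /\ Y z.
Definition msum (X Y : R -> Prop) : R -> Prop :=
  fun z => exists x y, [/\ X x, Y y & z = x + y].
Definition msums (I : Type) (M : I -> R -> Prop) (s : seq I) : R -> Prop :=
  foldr (fun i X => msum (M i) X) mzero s.

Lemma rsubmod0 : rsubmod mzero.
Proof. by split=> // [x y -> ->|x s -> _]; rewrite ?addr0 ?mul0r. Qed.

Lemma rsubmod_cap X Y : rsubmod X -> rsubmod Y -> rsubmod (mcap X Y).
Proof.
move=> [X0 XD XM] [Y0 YD YM]; split=> // [x y [] ? ? [] ? ?|x s [] ? ? ?].
  by split; [apply: XD | apply: YD].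
by split; [apply: XM | apply: YM].
Qed.

Lemma rsubmod_sum X Y : rsubmod X -> rsubmod Y -> rsubmod (msum X Y).
Proof.
move=> [X0 XD XM] [Y0 YD YM]; split.
- by exists 0, 0; rewrite addr0.
- move=> _ _ [x1 [y1 [? ? ->]]] [x2 [y2 [? ? ->]]].
  by exists (x1 + x2), (y1 + y2); rewrite addrACA; split; [apply: XD | apply: YD |].
- move=> _ s [x [y [? ? ->]]] Ss.
  by exists (x * s), (y * s); rewrite mulrDl; split; [apply: XM | apply: YM |].
Qed.

Lemma msum_subl X Y : Y 0 -> subset_of X (msum X Y).
Proof. by move=> Y0 x hx; exists x, 0; rewrite addr0. Qed.

Lemma msum_subr X Y : X 0 -> subset_of Y (msum X Y).
Proof. by move=> X0 y hy; exists 0, y; rewrite add0r. Qed.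

Lemma msumS X X' Y : subset_of X X' -> subset_of (msum X Y) (msum X' Y).
Proof. by move=> sX _ [x [y [hx hy ->]]]; exists x, y; split=> //; apply: sX. Qed.

Lemma msum_least X Y Z : rsubmod Z -> subset_of X Z -> subset_of Y Z ->
  subset_of (msum X Y) Z.
Proof.
by move=> [_ ZD _] sX sY _ [x [y [hx hy ->]]]; apply: ZD; [apply: sX | apply: sY].
Qed.

Lemma rsubmods I (M : I -> R -> Prop) (s : seq I) :
  (forall i, rsubmod (M i)) -> rsubmod (msums M s).
Proof. by move=> hM; elim: s => [|i s IH] /=; [exact: rsubmod0 | exact: rsubmod_sum]. Qed.

Lemma msums_mem (I : eqType) (M : I -> R -> Prop) (s : seq I) i :
  (forall i, rsubmod (M i)) -> i \in s -> subset_of (M i) (msums M s).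
Proof.
move=> hM; elim: s => [|j s IH] //; rewrite inE => /predU1P[-> | /IH sMi] /=.
  by apply: msum_subl; case: (rsubmods s hM).
by move=> x /sMi; apply: msum_subr; case: (hM j).
Qed.

Hypothesis S_N1 : S (-1).

Lemma rsubmodB X x y : rsubmod X -> X x -> X y -> X (x - y).
Proof. by move=> [_ XD XM] hx hy; rewrite -mulrN1; apply: XD => //; apply: XM. Qed.

Lemma modular_subset a b x : rsubmod a -> rsubmod b -> rsubmod x -> subset_of b a ->
  subset_of (mcap a x) (mcap b x) -> subset_of (msum a x) (msum b x) ->
  subset_of a b.
Proof.
move=> ha [_ bD _] [x0 _ _] sba scap ssum y hy.
have [z [w [hz hw eyzw]]] := ssum y (msum_subl x0 hy).
have haw : a w.
  have -> : w = y - z by rewrite eyzw addrC addKr.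
  by apply: rsubmodB => //; apply: sba.
by rewrite eyzw; apply: bD => //; case: (scap w (conj haw hw)).
Qed.

Lemma chain_cap a b x c : chain rsubmod a b c -> rsubmod x ->
  chain rsubmod (mcap a x) (mcap b x) (fun i => mcap (c i) x).
Proof.
move=> [cM cdec cbd] hx; split=> [i|i|i]; first exact: rsubmod_cap.
  by move=> z [/cdec].
by split=> z [hz hxz]; split=> //; [apply: (cbd i).1 | apply: (cbd i).2].
Qed.

Lemma chain_sum a b x c : chain rsubmod a b c -> rsubmod x ->
  chain rsubmod (msum a x) (msum b x) (fun i => msum (c i) x).
Proof.
move=> [cM cdec cbd] hx; split=> [i|i|i]; first exact: rsubmod_sum.
  exact: msumS.
by split; apply: msumS; [apply: (cbd i).1 | apply: (cbd i).2].
Qed.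

Lemma devP_modular k a b x : rsubmod x ->
  devP rsubmod k (mcap a x) (mcap b x) -> devP rsubmod k (msum a x) (msum b x) ->
  devP rsubmod k a b.
Proof.
move=> hx; elim: k a b => [|k IH] a b; rewrite !devPE => Hcap Hsum c hc;
  have [N1 h1] := Hcap _ (chain_cap hc hx); have [N2 h2] := Hsum _ (chain_sum hc hx);
  exists (maxn N1 N2) => i; rewrite geq_max => /andP[/h1 e1 /h2 e2].
  by case: hc => cM cdec _; apply: modular_subset e1 e2.
exact: IH.
Qed.

Lemma devP_trans k a b c : rsubmod a -> rsubmod b -> rsubmod c ->
  subset_of a b -> subset_of b c ->
  devP rsubmod k a b -> devP rsubmod k b c -> devP rsubmod k a c.
Proof.
move=> [a0 _ _] hb hc sab sbc Hab Hbc; apply: (devP_modular (x := b)) => //.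
  by apply: devPS Hab => [z hz | z []] //; split=> //; apply: sab.
by apply: devPS Hbc; [apply: msum_subr | apply: msum_least].
Qed.

Lemma devP_msum k X Y : rsubmod X -> rsubmod Y ->
  devP rsubmod k mzero X -> devP rsubmod k mzero Y -> devP rsubmod k mzero (msum X Y).
Proof.
move=> hX hY HX HY; have [X0 _ _] := hX; have [Y0 _ _] := hY.
apply: (devP_trans (b := Y)) => //; first exact: rsubmod0.
- exact: rsubmod_sum.
- by move=> _ ->.
- exact: msum_subr.
(* [(X + Y) / Y] is a quotient of [X]. *)
apply: (devP_modular (x := X)) => //.
  by apply: devPS HX => [_ -> | z []] //; split.
apply: devP_trivial; apply: msum_least; first exact: rsubmod_sum.
  by apply: msum_least; [exact: rsubmod_sum | apply: msum_subr | apply: msum_subl].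
exact: msum_subr.
Qed.

Lemma devP_msums k I (M : I -> R -> Prop) (s : seq I) :
  (forall i, rsubmod (M i)) -> (forall i, devP rsubmod k mzero (M i)) ->
  devP rsubmod k mzero (msums M s).
Proof.
move=> hM HM; elim: s => [|i s IH] /=; first exact: devP_trivial.
by apply: devP_msum => //; apply: rsubmods.
Qed.

Hypotheses (S0 : S 0) (SD : forall x y, S x -> S y -> S (x + y))
  (SM : forall x y, S x -> S y -> S (x * y)).

Definition mcyclic (x : R) : R -> Prop := fun z => exists2 s, S s & z = x * s.

Lemma rsubmod_cyclic x : rsubmod (mcyclic x).
Proof.
split; first by exists 0; rewrite ?mulr0.
  by move=> _ _ [s1 ? ->] [s2 ? ->]; exists (s1 + s2); rewrite ?mulrDr //; apply: SD.
by move=> _ s [s1 ? ->] ?; exists (s1 * s); rewrite ?mulrA //; apply: SM.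
Qed.

(* [x S] is a quotient of [S], via [s |-> x * s]. *)
Lemma devP_cyclic k x : devP (is_rideal S) k mzero S -> devP rsubmod k mzero (mcyclic x).
Proof.
pose phi (c : R -> Prop) s := S s /\ c (x * s).
apply: (@devP_transport _ _ _ phi (mcyclic x)) => //.
- by move=> c d scd s [? /scd].
- move=> c [c0 cD cM]; split=> [s [] //| | s t [? ?] [? ?] | s t [? ?] ?].
  + by split; rewrite ?mulr0.
  + by split; [apply: SD | rewrite mulrDr; apply: cD].
  + by split; [apply: SM | rewrite mulrA; apply: cM].
- by move=> c d _ _ sc _ scd z /[dup] /sc [s Ss ->] hz; case: (scd s (conj Ss hz)).
- by move=> _ ->; split; rewrite ?mulr0.
- by move=> s [].
Qed.

End Submodules.

Arguments mzero {R}.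

Section LinearCombination.
Variables (F : fieldType) (M : lmodType F) (V : eqType) (u : V -> M).

Definition lcomb (l : seq (F * V)) : M := \sum_(p <- l) p.1 *: u p.2.

Definition lspan (X : V -> Prop) (x : M) : Prop :=
  exists2 l : seq (F * V), (forall p, p \in l -> X p.2) & x = lcomb l.

Definition coef (l : seq (F * V)) (b : V) : F := \sum_(p <- l | p.2 == b) p.1.

Lemma lcomb_cat l1 l2 : lcomb (l1 ++ l2) = lcomb l1 + lcomb l2.
Proof. exact: big_cat. Qed.

Lemma lcomb_scale k l : lcomb [seq (k * p.1, p.2) | p <- l] = k *: lcomb l.
Proof. by rewrite /lcomb big_map scaler_sumr; apply: eq_bigr => p _; rewrite scalerA. Qed.

Lemma lcomb_coef l (t : seq V) : uniq t -> {subset [seq p.2 | p <- l] <= t} ->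
  lcomb l = \sum_(b <- t) coef l b *: u b.
Proof.
move=> ut slt; rewrite /lcomb /coef.
under [RHS]eq_bigr do rewrite scaler_suml.
rewrite (exchange_big_dep xpredT) //=; apply: eq_big_seq => p pl.
rewrite -big_filter (@eq_filter _ _ (pred1 p.2)) => [|b]; last by rewrite eq_sym.
by rewrite filter_pred1_uniq ?big_seq1 //; apply: slt; exact: map_f.
Qed.

Lemma lspan0 X : lspan X 0.
Proof. by exists [::]; rewrite // /lcomb big_nil. Qed.

Lemma lspanD X x y : lspan X x -> lspan X y -> lspan X (x + y).
Proof.
move=> [l1 h1 ->] [l2 h2 ->]; exists (l1 ++ l2); last by rewrite lcomb_cat.
by move=> p; rewrite mem_cat => /orP[/h1 | /h2].
Qed.

Lemma lspanZ X k x : lspan X x -> lspan X (k *: x).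
Proof.
move=> [l h ->]; exists [seq (k * p.1, p.2) | p <- l]; last by rewrite lcomb_scale.
by move=> _ /mapP[p /h ? ->].
Qed.

Lemma lspan_gen X b : X b -> lspan X (u b).
Proof.
by exists [:: (1, b)]; [move=> p; rewrite inE => /eqP -> | rewrite /lcomb big_seq1 scale1r].
Qed.

Lemma lspan_sum X (I : eqType) (s : seq I) (f : I -> M) :
  (forall i, i \in s -> lspan X (f i)) -> lspan X (\sum_(i <- s) f i).
Proof.
by move=> H; rewrite big_seq; apply: big_ind => //; [exact: lspan0 | exact: lspanD].
Qed.

Hypothesis u_free : forall (s : seq V) (c : V -> F), uniq s ->
  \sum_(a <- s) c a *: u a = 0 -> forall a, a \in s -> c a = 0.

Lemma lcomb_filter_eq0 (P : pred V) l :
  lcomb l = 0 -> lcomb [seq p <- l | P p.2] = 0.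
Proof.
set t := undup [seq p.2 | p <- l]; have ut : uniq t := undup_uniq _.
have slt : {subset [seq p.2 | p <- l] <= t} by move=> b; rewrite mem_undup.
rewrite (lcomb_coef ut slt) => l0; rewrite (lcomb_coef ut) => [|b]; last first.
  by move=> /mapP[p]; rewrite mem_filter => /andP[_ pl] ->; apply/slt/map_f.
rewrite big1_seq // => b /andP[_ bt]; rewrite /coef big_filter_cond.
have -> : \sum_(p <- l | P p.2 && (p.2 == b)) p.1 = (if P b then coef l b else 0).
  case: ifP => Pb; [apply: eq_bigl | apply: big_pred0];
    by move=> p /=; case: eqP => [->|]; rewrite ?Pb ?andbF.
by rewrite (u_free ut l0 bt) if_same scale0r.
Qed.

Lemma lcomb_filter_eq (P : pred V) l l' : lcomb l = lcomb l' ->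
  lcomb [seq p <- l | P p.2] = lcomb [seq p <- l' | P p.2].
Proof.
move=> e; apply/eqP; rewrite -subr_eq0; apply/eqP.
have := @lcomb_filter_eq0 P (l ++ [seq (-1 * p.1, p.2) | p <- l']).
rewrite filter_cat filter_map !lcomb_cat !lcomb_scale e scaleN1r subrr.
by rewrite scaleN1r; apply.
Qed.

End LinearCombination.

Section TwistedGroupAlgebra.
Variables (F : fieldType) (R : algType F) (n : nat) (u : 'rV[int]_n -> R).
Variables (tau : 'rV[int]_n -> 'rV[int]_n -> F) (A' : 'rV[int]_n -> Prop).
Hypotheses (Htga : twisted_group_algebra u tau) (HA' : is_subgroup A').
Local Notation V := 'rV[int]_n.
Local Notation T := (tga_span u A').
Local Notation S := (tga_span u (fun _ => True)).

Lemma tau_neq0 a b : tau a b != 0. Proof. by case: Htga. Qed.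
Lemma u_mul a b : u a * u b = tau a b *: u (a + b). Proof. by case: Htga. Qed.
Lemma u_free (s : seq V) (c : V -> F) : uniq s ->
  \sum_(a <- s) c a *: u a = 0 -> forall a, a \in s -> c a = 0.
Proof. by case: Htga => _ _ [free _] _; apply: free. Qed.
Lemma S_all x : S x. Proof. by case: Htga => _ _ [_ ?]. Qed.

Lemma tau_r0 b : tau b 0 = tau 0 0.
Proof.
case: Htga => _ cocycle _ _.
by have := cocycle b 0 0; rewrite !addr0 => /(mulfI (tau_neq0 b 0)).
Qed.

Lemma A'0 : A' 0. Proof. by case: HA'. Qed.
Lemma A'B a b : A' a -> A' b -> A' (a - b). Proof. by case: HA' => _; apply. Qed.
Lemma A'N a : A' a -> A' (- a). Proof. by rewrite -sub0r; apply/A'B/A'0. Qed.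
Lemma A'D a b : A' a -> A' b -> A' (a + b).
Proof. by move=> ha hb; rewrite -[b]opprK; apply/A'B/A'N. Qed.

Lemma lspan_tga X x : lspan u X x <-> tga_span u X x.
Proof.
split=> [[l h ->] | [s [c [h ->]]]].
  exists (undup [seq p.2 | p <- l]), (coef l); split.
    by move=> a; rewrite mem_undup => /mapP[p /h ? ->].
  by apply: lcomb_coef => [|b]; rewrite ?undup_uniq ?mem_undup.
by exists [seq (c a, a) | a <- s]; [move=> _ /mapP[a /h ? ->] | rewrite /lcomb big_map].
Qed.

Lemma lcomb_surj x : exists l, x == lcomb u l.
Proof. by have /lspan_tga [l _ ->] := S_all x; exists l. Qed.

Lemma u_mul_lcomb a l :
  u a * lcomb u l = lcomb u [seq (tau a p.2 * p.1, a + p.2) | p <- l].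
Proof.
rewrite /lcomb big_map mulr_sumr; apply: eq_bigr => p _.
by rewrite -scalerAr u_mul scalerA mulrC.
Qed.

(* So [u 0 = tau 0 0 *: 1]; the cocycle identity makes [tau b 0] independent of [b]. *)
Lemma mulr_u0 x : x * u 0 = tau 0 0 *: x.
Proof.
have [l /eqP ->] := lcomb_surj x; rewrite /lcomb mulr_suml scaler_sumr.
by apply: eq_bigr => p _; rewrite -scalerAl u_mul addr0 tau_r0 !scalerA mulrC.
Qed.

Lemma T0 : T 0. Proof. exact/lspan_tga/lspan0. Qed.
Lemma TD x y : T x -> T y -> T (x + y).
Proof. by move=> /lspan_tga hx /lspan_tga hy; apply/lspan_tga/lspanD. Qed.
Lemma TZ k x : T x -> T (k *: x).
Proof. by move=> /lspan_tga hx; apply/lspan_tga/lspanZ. Qed.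
Lemma T_u a : A' a -> T (u a).
Proof. by move=> ha; apply/lspan_tga/lspan_gen. Qed.

Lemma TM x y : T x -> T y -> T (x * y).
Proof.
move=> /lspan_tga [l1 h1 ->] /lspan_tga [l2 h2 ->]; apply/lspan_tga.
rewrite /lcomb mulr_suml; apply: lspan_sum => p /h1 hp.
rewrite -scalerAl u_mul_lcomb; apply/lspanZ.
exists [seq (tau p.2 q.2 * q.1, p.2 + q.2) | q <- l2] => //.
by move=> _ /mapP[q /h2 hq ->]; apply: A'D.
Qed.

Lemma T1 : T 1.
Proof.
have := mulr_u0 1; rewrite mul1r => e.
rewrite -[1](scalerK (tau_neq0 0 0)) -e; apply/TZ/T_u/A'0.
Qed.

Lemma TN1 : T (-1). Proof. by rewrite -scaleN1r; apply/TZ/T1. Qed.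

Lemma rsubmodZ X k x : rsubmod T X -> X x -> X (k *: x).
Proof. by move=> [_ _ XM] hx; rewrite -[x]mulr1 scalerAr; apply: XM => //; apply/TZ/T1. Qed.

Lemma dim_tga_le_sub k : finite_index A' ->
  devP (is_rideal T) k mzero T -> devP (is_rideal S) k mzero S.
Proof.
move=> [s cosets] HT; pose C r := mcyclic T (u r).
have hC r : rsubmod T (C r) := rsubmod_cyclic T0 TD TM (u r).
have HC r : devP (rsubmod T) k mzero (C r) := devP_cyclic T0 TD TM (u r) HT.
have cover : subset_of S (msums C s).
  move=> z _; have [l /eqP ->] := lcomb_surj z; have hM := rsubmods s hC.
  have [M0 MD _] := hM; rewrite /lcomb big_seq; apply: big_ind => // p _.
  apply: rsubmodZ hM _; have [r rs hr] := cosets p.2; apply: (msums_mem hC rs).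
  exists ((tau r (p.2 - r))^-1 *: u (p.2 - r)); first exact/TZ/T_u.
  by rewrite -scalerAr u_mul scalerA mulVf ?tau_neq0 // scale1r addrC subrK.
apply: devP_restrict (devPS _ cover (devP_msums TN1 s hC HC)) => [X [_ X0 XD XM] | _ ->] //.
by split=> // x y hx _; apply: XM => //; apply: S_all.
Qed.

Definition inA' (b : V) : bool :=
  if excluded_middle_informative (A' b) then true else false.

Lemma inA'P b : reflect (A' b) (inA' b).
Proof. by rewrite /inA'; case: excluded_middle_informative => h; constructor. Qed.

Lemma inA'D a b : A' a -> inA' (a + b) = inA' b.
Proof.
move=> ha; apply/inA'P/inA'P => hb; last exact: A'D.
by rewrite -(addKr a b); apply/A'D/hb/A'N.
Qed.

Definition pi (x : R) : R := lcomb u [seq p <- xchoose (lcomb_surj x) | inA' p.2].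

Lemma pi_lcomb l : pi (lcomb u l) = lcomb u [seq p <- l | inA' p.2].
Proof.
by apply: lcomb_filter_eq u_free _ _ _ _; rewrite -(eqP (xchooseP (lcomb_surj _))).
Qed.

Lemma piD x y : pi (x + y) = pi x + pi y.
Proof.
have [l1 /eqP ->] := lcomb_surj x; have [l2 /eqP ->] := lcomb_surj y.
by rewrite -lcomb_cat !pi_lcomb filter_cat lcomb_cat.
Qed.

Lemma piZ k x : pi (k *: x) = k *: pi x.
Proof.
have [l /eqP ->] := lcomb_surj x.
by rewrite -lcomb_scale !pi_lcomb filter_map lcomb_scale.
Qed.

Lemma pi0 : pi 0 = 0.
Proof. by have := pi_lcomb [::]; rewrite /lcomb !big_nil. Qed.

Lemma pi_sum (I : Type) (s : seq I) (f : I -> R) :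
  pi (\sum_(i <- s) f i) = \sum_(i <- s) pi (f i).
Proof. exact: (big_morph pi piD pi0). Qed.

Lemma pi_T t : T t -> pi t = t.
Proof.
move=> /lspan_tga [l h ->]; rewrite pi_lcomb; congr lcomb.
by apply/all_filterP/allP => p /h /inA'P.
Qed.

Lemma T_pi x : T (pi x).
Proof.
apply/lspan_tga; exists [seq p <- xchoose (lcomb_surj x) | inA' p.2] => // p.
by rewrite mem_filter => /andP[/inA'P].
Qed.

Lemma pi_u_mull a x : A' a -> pi (u a * x) = u a * pi x.
Proof.
move=> ha; have [l /eqP ->] := lcomb_surj x.
rewrite u_mul_lcomb !pi_lcomb u_mul_lcomb filter_map; congr (lcomb u (map _ _)).
by apply: eq_filter => p /=; apply: inA'D.
Qed.

Lemma pi_mull t x : T t -> pi (t * x) = t * pi x.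
Proof.
move=> /lspan_tga [l h ->]; rewrite /lcomb !mulr_suml pi_sum.
by apply: eq_big_seq => p /h hp; rewrite -!scalerAl piZ pi_u_mull.
Qed.

(* [c] is recovered from [phi c] because [pi] fixes [T] and is left [T]-linear. *)
Lemma dim_sub_le_tga k : devP (is_rideal S) k mzero S -> devP (is_rideal T) k mzero T.
Proof.
pose phi (c : R -> Prop) x := forall y, c (pi (x * y)).
apply: (@devP_transport _ _ _ phi T) => //.
- by move=> c d scd x hx y; apply: scd.
- move=> c [_ c0 cD cM]; split=> [x _ | y | x y hx hy z | x y hx _ z].
  + exact: S_all.
  + by rewrite mul0r pi0.
  + by rewrite mulrDl piD; apply: cD.
  + by rewrite -mulrA; apply: hx.
- move=> c d [sc _ _ cM] _ _ _ scd x hx.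
  have Tx : T x := sc x hx.
  have hx' : phi c x by move=> y; rewrite pi_mull //; apply: cM => //; apply: T_pi.
  by have := scd x hx' 1; rewrite mulr1 pi_T.
- by move=> _ -> y; rewrite mul0r pi0.
- by move=> x _; apply: S_all.
Qed.

End TwistedGroupAlgebra.

Theorem corollary5p2 (F : fieldType) (R : algType F) (n : nat)
    (u : 'rV[int]_n -> R) (tau : 'rV[int]_n -> 'rV[int]_n -> F)
    (A' : 'rV[int]_n -> Prop) :
  twisted_group_algebra u tau ->
  is_subgroup A' -> finite_index A' ->
  forall k : nat,
    rKdim_le (tga_span u A') k <-> rKdim_le (tga_span u (fun _ => True)) k.
Proof.
move=> Htga HA' fin k; rewrite /rKdim_le !dev_leE.
split=> H; [exact: (dim_tga_le_sub Htga HA' fin H) | exact: (dim_sub_le_tga Htga HA' H)].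
Qed.
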